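(* In the homogeneous UAV Persistent Service model ($g_i=g$, $2g<f$), under HoRR with $M=N+\lceil\frac{c+2g}{f-2g}N\rceil$ UAVs and $x=\frac{f-2g}{N}$, every UAV is instructed to recharge periodically: the difference between any two consecutive times at which the same UAV is instructed to recharge equals $$\left(N+\left\lceil\frac{2g+c}{x}\right\rceil\right)x .$$
   Context: UAV Persistent Service model: single recharging station (RS), $N$ aerial locations, identical UAVs with maximum flight time $f>0$, recharge/battery-swap time $c\ge0$, and flight time $g>0$ between the RS and every location, $2g<f$. HoRR schedule: with $x=\frac{f-2g}{N}$, at time $0$ one fully charged UAV is at each location and the remaining (backup) UAVs are fully charged at the RS. For each $k=1,2,\dots$, a fully charged backup departs the RS at time $kx-g$ and at time $kx$ replaces the serving UAV with least remaining energy (ties broken arbitrarily); the relieved UAV is ''instructed to recharge'' at time $kx$, flies back to the RS, recharges for $c$ time units, and then becomes a backup. Backups are dispatched in the order in which they became ready. *)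

From mathcomp Require Import all_boot all_order all_algebra.
Set Implicit Arguments. Unset Strict Implicit. Unset Printing Implicit Defensive.
Import Order.TTheory GRing.Theory Num.Theory.
Local Open Scope ring_scope.

(* A state of the system right after the replacement performed at time k*x
   (or at time 0 for the initial state):
   - [serv i]  : the UAV currently serving location i;
   - [ftime u] : the last time at which UAV u was fully charged and left the RS
                 (for the initially serving UAVs this is 0).  The remaining
                 energy of a serving UAV u at time t is f - (t - ftime u), so
                 "least remaining energy" = "smallest ftime";
   - [queue]   : the backups (at / on their way to the RS), in the order in
                 which they became ready (FIFO dispatch order). *)
Record state (N M : nat) (R : Type) := State {
  serv : 'I_N -> 'I_M;
  ftime : 'I_M -> R;
  queue : seq 'I_M
}.

Section HoRR.
Variables (R : realFieldType) (N M : nat).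

(* Initial configuration at time 0: one fully charged UAV at each location
   (distinct UAVs), all remaining UAVs are backups at the RS; since they are
   all ready at time 0 their dispatch order is arbitrary. *)
Definition initial_state (s : state N M R) : Prop :=
  injective (serv s) /\
  (forall i, ftime s (serv s i) = 0) /\
  uniq (queue s) /\
  (forall u, u \in queue s <-> ~ (exists i, serv s i = u)).

(* One step of HoRR at time k*x: the head d of the backup queue departs the RS
   at time k*x - g fully charged; at time k*x it replaces the UAV serving
   location i, where the UAV at i has least remaining energy (ties broken
   arbitrarily, i.e. any minimiser is allowed); the relieved UAV is appended to
   the queue (it becomes ready at k*x + g + c, after all earlier-relieved UAVs). *)
Definition horr_step (g x : R) (k : nat) (s : state N M R) (i : 'I_N)
  (s' : state N M R) : Prop :=
  (forall j, ftime s (serv s i) <= ftime s (serv s j)) /\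
  exists d rest, queue s = d :: rest /\
    serv s' = (fun j => if j == i then d else serv s j) /\
    ftime s' = (fun u => if u == d then k%:R * x - g else ftime s u) /\
    queue s' = rcons rest (serv s i).

(* A run of HoRR: a sequence of states and of replaced locations
   (the latter encode the arbitrary tie-breaking). *)
Definition horr_run (g x : R) (st : nat -> state N M R) (loc : nat -> 'I_N)
  : Prop :=
  initial_state (st 0%N) /\
  forall k, (0 < k)%N -> horr_step g x k (st k.-1) (loc k) (st k).

Definition instructed (st : nat -> state N M R) (loc : nat -> 'I_N)
  (u : 'I_M) (k : nat) : Prop :=
  (0 < k)%N /\ serv (st k.-1) (loc k) = u.

End HoRR.

From mathcomp Require Import all_boot all_order all_algebra.
From mathcomp Require Import ring lra zify.
Set Implicit Arguments. Unset Strict Implicit. Unset Printing Implicit Defensive.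
Import Order.TTheory GRing.Theory Num.Theory.
Local Open Scope ring_scope.

(* The backups form a FIFO queue of constant length Q = M - N = ceil((2g+c)/x).
   A UAV relieved at step k enters the queue last, so it is dispatched again
   at step k + Q.  Since Q x > g, its new charging time (k+Q) x - g is strictly
   the latest among the serving UAVs, and every later dispatch is later still.
   Each step relieves a UAV with minimal charging time, hence one of the N - 1
   UAVs charged before it; after exactly N - 1 steps it is the oldest, and it is
   relieved at step k + Q + N = k + M. *)

Section Step.
Variables (R : realFieldType) (N M : nat) (g x : R).
Implicit Types (s : state N M R) (i j : 'I_N) (u : 'I_M).

Definition launch s j := ftime s (serv s j).

Definition wf_state s :=
  [/\ injective (serv s), uniq (queue s) &
      forall u, u \in queue s <-> ~ exists j, serv s j = u].

Lemma queued_not_serving s u j : wf_state s -> u \in queue s -> serv s j != u.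
Proof. by case=> _ _ Hq /Hq Hu; apply/eqP => Eu; apply: Hu; exists j. Qed.

Lemma size_queue_wf s : wf_state s -> (N + size (queue s))%N = M.
Proof.
case=> inj_serv uniq_q Hq.
have -> : size (queue s) = #|[predC codom (serv s)]|.
  rewrite -(card_uniqP uniq_q); apply: eq_card => u; rewrite !inE.
  apply/idP/idP => [/Hq Hu | Hu]; apply/negP.
    by move=> /codomP [j Ej]; apply: Hu; exists j.
  by move/Hq; apply=> -[j Ej]; move/negP: Hu; apply; apply/codomP; exists j.
have := cardC (mem (codom (serv s))).
by rewrite card_codom // !card_ord.
Qed.

Section OneStep.
Variables (k : nat) (s s' : state N M R) (i : 'I_N).
Hypothesis step : horr_step g x k s i s'.

Lemma launch_step_min j : launch s i <= launch s j.
Proof. by case: step => Hmin _; exact: Hmin. Qed.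

Lemma launch_step_new : launch s' i = k%:R * x - g.
Proof. by case: step => _ [d [rest [_ [Hs [Hf _]]]]]; rewrite /launch Hs Hf /= !eqxx. Qed.

Lemma serv_step_other j : j != i -> serv s' j = serv s j.
Proof. by case: step => _ [d [rest [_ [-> _]]]] /negbTE /= ->. Qed.

Lemma launch_step_other j : wf_state s -> j != i -> launch s' j = launch s j.
Proof.
move=> wf_s Nji; rewrite /launch (serv_step_other Nji).
case: step => _ [d [rest [Hq [_ [-> _]]]]] /=.
by rewrite ifN // (queued_not_serving j wf_s) // Hq mem_head.
Qed.

Lemma serv_step_head u : index u (queue s) = 0%N -> u \in queue s -> serv s' i = u.
Proof.
case: step => _ [d [rest [-> [-> _]]]] /=; rewrite eqxx.
by case: eqP => // _; rewrite inE => -> /=.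
Qed.

Lemma index_queue_step u p : u \in queue s -> index u (queue s) = p.+1 ->
  u \in queue s' /\ index u (queue s') = p.
Proof.
case: step => _ [d [rest [-> [_ [_ ->]]]]] /=; rewrite inE eq_sym.
case: eqP => //= _ ur [<-].
by rewrite mem_rcons inE ur orbT -cats1 index_cat ur.
Qed.

Lemma relieved_queued : wf_state s' ->
  serv s i \in queue s' /\ index (serv s i) (queue s') = (size (queue s')).-1.
Proof.
case=> _ + _; case: step => _ [d [rest [_ [_ [_ ->]]]]].
rewrite rcons_uniq size_rcons mem_rcons mem_head => /andP [/negbTE ri _].
by rewrite -cats1 index_cat ri /= eqxx addn0.
Qed.

Lemma wf_step : wf_state s -> wf_state s'.
Proof.
move=> wf_s; have [inj_serv uniq_q Hq] := wf_s.
case: step => _ [d [rest [Eq [Hs [_ Eq']]]]].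
have dq : d \in queue s by rewrite Eq mem_head.
have Hd j : serv s j != d by exact: queued_not_serving.
have si_q : serv s i \notin queue s by apply/negP => /Hq; apply; exists i.
split; rewrite ?Eq' ?Hs.
- move=> j1 j2 /=.
  case: eqP => [->|_]; case: eqP => [->|_] // E; last exact: inj_serv.
    by move: (Hd j2); rewrite -E eqxx.
  by move: (Hd j1); rewrite E eqxx.
- move: uniq_q si_q; rewrite Eq /= inE rcons_uniq => /andP [_ ->].
  by rewrite negb_or => /andP [_ ->].
- move=> u; rewrite mem_rcons inE; split.
  + case/orP => [/eqP -> | ur] [j].
      case: eqP => [_ Ed | Nji /inj_serv //]; by move: (Hd i); rewrite Ed eqxx.
    have uq : u \in queue s by rewrite Eq inE ur orbT.
    case: eqP => [_ Ed | _]; last by apply/eqP/queued_not_serving.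
    by move: uniq_q; rewrite Eq /= Ed ur.
  + move=> Hu; case: (eqVneq u (serv s i)) => //= Nu.
    have : u \in queue s.
      apply/Hq => -[j Ej]; apply: Hu; exists j.
      by case: eqP => [Eji|//]; move: Nu; rewrite -Ej Eji eqxx.
    rewrite Eq inE => /orP [/eqP Ed|//].
    by exfalso; apply: Hu; exists i; rewrite eqxx Ed.
Qed.

End OneStep.
End Step.

Section Run.
Variables (R : realFieldType) (N M : nat) (g x : R)
  (st : nat -> state N M R) (loc : nat -> 'I_N).
Hypothesis run : horr_run g x st loc.
Implicit Types (u : 'I_M) (j : 'I_N).

Lemma run_step k : horr_step g x k.+1 (st k) (loc k.+1) (st k.+1).
Proof. by case: run => _; apply. Qed.

Lemma wf_run k : wf_state (st k).
Proof.
elim: k => [|k IH]; last exact: wf_step (run_step k) IH.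
by case: run => -[? [_ [? ?]]] _; split.
Qed.

Lemma size_queue_run k : size (queue (st k)) = (M - N)%N.
Proof. by rewrite -[in RHS](size_queue_wf (wf_run k)) addKn. Qed.

Lemma instructedE u k : instructed st loc u k.+1 <-> serv (st k) (loc k.+1) = u.
Proof. by split=> [[]|]. Qed.

Lemma queued_not_instructed u k : u \in queue (st k) -> ~ instructed st loc u k.+1.
Proof. by move=> uq /instructedE /eqP; apply/negP/queued_not_serving/uq/wf_run. Qed.

Lemma queue_advance u k m : u \in queue (st k) -> (m <= index u (queue (st k)))%N ->
  u \in queue (st (k + m)) /\ index u (queue (st (k + m))) = (index u (queue (st k)) - m)%N.
Proof.
move=> uq; elim: m => [_|m IH lt_m]; first by rewrite addn0 subn0.
have [uq' Ei] := IH (ltnW lt_m).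
have Ei' : index u (queue (st (k + m))) = (index u (queue (st k)) - m.+1).+1%N by rewrite Ei; lia.
by rewrite addnS; have := index_queue_step (run_step (k + m)) uq' Ei'.
Qed.

Lemma queued_dispatched u k : u \in queue (st k) ->
  let kd := (k + index u (queue (st k))).+1 in
  serv (st kd) (loc kd) = u /\ launch (st kd) (loc kd) = kd%:R * x - g.
Proof.
move=> uq /=; have [uq' Ei] := queue_advance uq (leqnn _).
rewrite subnn in Ei; split; last exact: launch_step_new (run_step _).
by apply: (serv_step_head (run_step _)) Ei uq'.
Qed.

Hypothesis x_ge0 : 0 <= x.

Lemma launch_le_max k j : launch (st k) j <= Num.max 0 (k%:R * x - g).
Proof.
elim: k j => [|k IH] j.
  by case: run => -[_ [H0 _]] _; rewrite /launch H0 le_max lexx.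
case: (eqVneq j (loc k.+1)) => [->|Nj].
  by rewrite (launch_step_new (run_step k)) le_max lexx orbT.
rewrite (launch_step_other (run_step k) (wf_run k) Nj); apply: le_trans (IH j) _.
by rewrite ge_max le_max lexx /= le_max lerD2r ler_wpM2r ?ler_nat ?leqnSn ?orbT.
Qed.

End Run.

Section Relief.
Variables (R : realFieldType) (N M : nat) (g x : R)
  (st : nat -> state N M R) (loc : nat -> 'I_N).
Hypothesis run : horr_run g x st loc.
Variable t : R.

Definition older k := [set j | launch (st k) j <= t].

Lemma older_step k j0 : t < k.+1%:R * x - g -> launch (st k) j0 = t ->
  serv (st k) (loc k.+1) != serv (st k) j0 ->
  [/\ serv (st k.+1) j0 = serv (st k) j0, launch (st k.+1) j0 = t
    & #|older k.+1|.+1 = #|older k|].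
Proof.
move=> t_lt Ej0 Nrel; have step := run_step run k; have wf_k := wf_run run k.
have Nj0 : j0 != loc k.+1 by apply: contraNneq Nrel => ->.
rewrite (serv_step_other step Nj0) (launch_step_other step wf_k Nj0); split=> //.
have -> : older k.+1 = older k :\ loc k.+1.
  apply/setP => j; rewrite !inE; case: eqVneq => [->|Nj] /=.
    by rewrite (launch_step_new step) leNgt t_lt.
  by rewrite (launch_step_other step wf_k Nj).
have old_rel : loc k.+1 \in older k by rewrite inE -Ej0 (launch_step_min step).
by rewrite [RHS](cardsD1 (loc k.+1)) old_rel.
Qed.

Lemma relieved_within k j0 : launch (st k) j0 = t ->
  (forall k', (k < k')%N -> t < k'%:R * x - g) ->
  exists m, [/\ (0 < m <= #|older k|)%N, instructed st loc (serv (st k) j0) (k + m)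
    & forall m', (0 < m' < m)%N -> ~ instructed st loc (serv (st k) j0) (k + m')].
Proof.
move: {2}#|older k| (leqnn #|older k|) => n.
elim: n k j0 => [|n IH] k j0 le_n Ej0 later.
  have : j0 \in older k by rewrite inE Ej0.
  by move: le_n; rewrite leqn0 cards_eq0 => /eqP ->; rewrite inE.
have j0_old : j0 \in older k by rewrite inE Ej0.
have pos_old : (0 < #|older k|)%N by apply/card_gt0P; exists j0.
case: (eqVneq (serv (st k) (loc k.+1)) (serv (st k) j0)) => [rel | Nrel].
  exists 1%N; rewrite addn1 pos_old.
  by split; [| apply/instructedE | case=> [|[]]].
have [Eserv Ej0' Ecard] := older_step (later _ (ltnSn k)) Ej0 Nrel.
have later' k' : (k.+1 < k')%N -> t < k'%:R * x - g by move=> lt_k'; exact/later/ltnW.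
have le_n' : (#|older k.+1| <= n)%N by rewrite -ltnS Ecard.
have [m [/andP [m_gt0 le_m] inst none]] := IH _ _ le_n' Ej0' later'.
rewrite Eserv in inst none.
exists m.+1; split; first by rewrite -Ecard ltnS.
  by rewrite addnS -addSn.
case=> [//|[|m'] /andP [_ lt_m']].
  by rewrite addn1 => /instructedE /eqP; rewrite (negbTE Nrel).
by rewrite addnS -addSn; apply: none.
Qed.

Section LaterDispatches.
Variable k : nat.
Hypothesis later : forall k', (k < k')%N -> t < k'%:R * x - g.

Lemma launch_since m j :
  launch (st (k + m)) j = launch (st k) j \/ t < launch (st (k + m)) j.
Proof.
elim: m => [|m IH]; first by rewrite addn0; left.
have step := run_step run (k + m); rewrite addnS.
case: (eqVneq j (loc (k + m).+1)) => [->|Nj].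
  by right; rewrite (launch_step_new step) later // ltnS leq_addr.
by rewrite (launch_step_other step (wf_run run _) Nj).
Qed.

Lemma unrelieved_older j0 m : launch (st k) j0 = t ->
  (forall m', (0 < m' <= m)%N -> ~ instructed st loc (serv (st k) j0) (k + m')) ->
  [/\ serv (st (k + m)) j0 = serv (st k) j0, launch (st (k + m)) j0 = t
    & (#|older (k + m)| + m)%N = #|older k|].
Proof.
move=> Ej0; elim: m => [_|m IH none]; first by rewrite !addn0.
have [Eserv Ej0' Ecard] : [/\ serv (st (k + m)) j0 = serv (st k) j0,
    launch (st (k + m)) j0 = t & (#|older (k + m)| + m)%N = #|older k|].
  by apply: IH => m' /andP [m'_gt0 le_m']; apply: none; rewrite m'_gt0 ltnW.
have Nrel : serv (st (k + m)) (loc (k + m).+1) != serv (st (k + m)) j0.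
  apply/eqP; rewrite Eserv => rel; apply: (none m.+1); first by rewrite ltn0Sn leqnn.
  by rewrite addnS; apply/instructedE.
have [Eserv' Ej0'' Ecard'] := older_step (later (ltn_addr _ (ltnSn k))) Ej0' Nrel.
by rewrite addnS Eserv' Eserv Ej0'' -Ecard addnS -Ecard'.
Qed.

Lemma relieved_exactly j0 : launch (st k) j0 = t ->
  (forall j, j != j0 -> launch (st k) j < t) ->
  (forall m, (0 < m < N)%N -> ~ instructed st loc (serv (st k) j0) (k + m)) /\
  instructed st loc (serv (st k) j0) (k + N).
Proof.
move=> Ej0 newest.
have old_all : older k = [set: 'I_N].
  apply/setP => j; rewrite !inE.
  case: (eqVneq j j0) => [->|Nj]; first by rewrite Ej0 lexx.
  by rewrite ltW // newest.
have card_old_all : #|older k| = N by rewrite old_all cardsT card_ord.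
have [m [/andP [m_gt0 le_mN] inst none]] := relieved_within Ej0 later.
rewrite card_old_all in le_mN.
suff Em : m = N.
  split; last by rewrite -[N in (k + N)%N]Em.
  by move=> m' /andP [m'_gt0 lt_m']; apply: none; rewrite m'_gt0 Em.
apply/eqP; rewrite eqn_leq le_mN /=.
case: m m_gt0 le_mN inst none => // m _ _; rewrite addnS => /instructedE rel none.
have [Eserv Ej0' Ecard] : [/\ serv (st (k + m)) j0 = serv (st k) j0,
    launch (st (k + m)) j0 = t & (#|older (k + m)| + m)%N = #|older k|].
  by apply: unrelieved_older => // m' /andP [m'_gt0 le_m']; apply: none; rewrite m'_gt0.
have rel_j0 : loc (k + m).+1 = j0.
  by case: (wf_run run (k + m)) => inj_serv _ _; apply: inj_serv; rewrite Eserv.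
(* Every other location still carries its launch time from step k (< t) or a
   later dispatch (> t); minimality of the relieved UAV rules out the former. *)
have older_j0 : older (k + m) \subset [set j0].
  apply/subsetP => j; rewrite !inE; apply: contraTT => Nj; rewrite -ltNge.
  have := launch_step_min (run_step run (k + m)) j; rewrite rel_j0 Ej0'.
  case: (launch_since m j) => [->|//]; rewrite le_eqVlt => /orP [/eqP Ej|//].
  by move: (newest _ Nj); rewrite -Ej ltxx.
by have := subset_leq_card older_j0; rewrite cards1; lia.
Qed.

End LaterDispatches.
End Relief.

Section Period.
Variables (R : realFieldType) (N M : nat) (g x : R)
  (st : nat -> state N M R) (loc : nat -> 'I_N).
Hypothesis run : horr_run g x st loc.
Hypothesis x_gt0 : 0 < x.
Hypothesis backups_cover_return : g < (M - N)%:R * x.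

Lemma launch_lt_dispatch k k' j : (k < k')%N -> (M - N <= k')%N ->
  launch (st k) j < k'%:R * x - g.
Proof.
move=> lt_kk' le_k'; apply: le_lt_trans (launch_le_max run (ltW x_gt0) k j) _.
have g_lt : g < k'%:R * x.
  by apply: lt_le_trans backups_cover_return _; rewrite ler_pM2r // ler_nat.
have lt_x : k%:R * x < k'%:R * x by rewrite ltr_pM2r // ltr_nat.
by rewrite gt_max; apply/andP; split; lra.
Qed.

Lemma dispatched_relieved k u : (M - N <= k.+1)%N ->
  serv (st k.+1) (loc k.+1) = u -> launch (st k.+1) (loc k.+1) = k.+1%:R * x - g ->
  (forall m, (0 < m < N)%N -> ~ instructed st loc u (k.+1 + m)) /\
  instructed st loc u (k.+1 + N).
Proof.
move=> le_k <- Elaunch.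
have later k' : (k.+1 < k')%N -> k.+1%:R * x - g < k'%:R * x - g.
  by move=> lt_k'; rewrite ltrD2r ltr_pM2r // ltr_nat.
apply: (relieved_exactly run later Elaunch) => j Nj.
rewrite (launch_step_other (run_step run k) (wf_run run k) Nj).
by apply: launch_lt_dispatch.
Qed.

Lemma next_instruction u k1 : instructed st loc u k1 ->
  (forall k, (k1 < k < k1 + M)%N -> ~ instructed st loc u k) /\
  instructed st loc u (k1 + M).
Proof.
case: k1 => [[]//|k0] /instructedE rel.
have [uq Ei] := relieved_queued (run_step run k0) (wf_run run _).
have Q_gt0 : (0 < M - N)%N by rewrite -(size_queue_run run k0.+1); case: (queue _) uq.
rewrite rel (size_queue_run run) in uq Ei.
have [] := queued_dispatched run uq; rewrite Ei.
have -> : (k0.+1 + (M - N).-1).+1 = (k0 + (M - N)).+1 by lia.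
move=> serv_kd launch_kd.
have le_kd : (M - N <= (k0 + (M - N)).+1)%N by lia.
have [none_after inst] := dispatched_relieved le_kd serv_kd launch_kd.
have none_queued m : (m < M - N)%N -> ~ instructed st loc u (k0.+1 + m).+1.
  move=> lt_m; apply: (queued_not_instructed run).
  have le_m : (m <= index u (queue (st k0.+1)))%N by rewrite Ei; lia.
  by have [] := queue_advance run uq le_m.
split; last by have <- : ((k0 + (M - N)).+1 + N = k0.+1 + M)%N by lia.
move=> k /andP [lt_k lt_kM].
case: (leqP k (k0 + (M - N)).+1) => k_le.
  have -> : k = (k0.+1 + (k - k0.+2)).+1 by lia.
  by apply: none_queued; lia.
have -> : k = ((k0 + (M - N)).+1 + (k - (k0 + (M - N)).+1))%N by lia.
by apply: none_after; lia.
Qed.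

Lemma instructed_eventually u : exists k, instructed st loc u k.
Proof.
case: (boolP (u \in queue (st (M - N)))) => [uq | /negP uq].
  have [serv_kd launch_kd] := queued_dispatched run uq.
  have le_kd : (M - N <= (M - N + index u (queue (st (M - N)))).+1)%N by lia.
  by have [_ inst] := dispatched_relieved le_kd serv_kd launch_kd; eexists; exact: inst.
have [j0 <-] : exists j0, serv (st (M - N)) j0 = u.
  case: (pickP (fun j => serv (st (M - N)) j == u)) => [j0 /eqP|none]; first by exists j0.
  case: (wf_run run (M - N)) => _ _ Hq.
  by exfalso; apply/uq/Hq => -[j /eqP]; rewrite none.
have later k' : (M - N < k')%N -> launch (st (M - N)) j0 < k'%:R * x - g.
  by move=> lt_k'; apply: launch_lt_dispatch => //; apply: ltnW.
by have [m [_ inst _]] := relieved_within run erefl later; exists (M - N + m)%N.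
Qed.
Lemma consecutive_instructions u k1 k2 : (k1 < k2)%N ->
  instructed st loc u k1 -> instructed st loc u k2 ->
  (forall k, (k1 < k < k2)%N -> ~ instructed st loc u k) -> k2 = (k1 + M)%N.
Proof.
move=> lt_k12 inst1 inst2 none; have [none1 inst1M] := next_instruction inst1.
case: (ltngtP k2 (k1 + M)) => // cmp.
  by exfalso; apply: (none1 k2) => //; rewrite lt_k12.
have M_gt0 : (0 < M)%N by apply: leq_ltn_trans (ltn_ord u).
by exfalso; apply: (none (k1 + M)%N) => //; rewrite cmp andbT -addn1 leq_add2l.
Qed.

End Period.

Theorem corollary1 (R : archiRealFieldType) (N M : nat) (f c g : R)
  (st : nat -> state N M R) (loc : nat -> 'I_N) :
  (0 < N)%N -> 0 < f -> 0 <= c -> 0 < g -> 2 * g < f ->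
  M%:R = N%:R + (Num.ceil ((c + 2 * g) / (f - 2 * g) * N%:R))%:~R :> R ->
  let x := (f - 2 * g) / N%:R in
  horr_run g x st loc ->
  forall u : 'I_M,
    (exists k, instructed st loc u k) /\
    (forall k, instructed st loc u k ->
       exists k', (k < k')%N /\ instructed st loc u k') /\
    (forall k1 k2, (k1 < k2)%N ->
       instructed st loc u k1 -> instructed st loc u k2 ->
       (forall k, (k1 < k < k2)%N -> ~ instructed st loc u k) ->
       k2%:R * x - k1%:R * x = (N%:R + (Num.ceil ((2 * g + c) / x))%:~R) * x).
Proof.
move=> N_gt0 _ c_ge0 g_gt0 gf EM x run u.
have x_gt0 : 0 < x by rewrite divr_gt0 ?ltr0n // subr_gt0.
set z := Num.ceil ((2 * g + c) / x).
have Ez : (c + 2 * g) / (f - 2 * g) * N%:R = (2 * g + c) / x.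
  have fg_neq0 : f - 2 * g != 0 by rewrite gt_eqF // subr_gt0.
  by rewrite /x; field; rewrite fg_neq0 gt_eqF ?ltr0n.
rewrite Ez -/z in EM.
have le_NM : (N <= M)%N by have := size_queue_wf (wf_run run 0); lia.
have EQ : (M - N)%:R = z%:~R :> R.
  by rewrite natrB // EM addrC addKr.
have cover : 2 * g + c <= (M - N)%:R * x.
  by rewrite EQ -ler_pdivrMr // ceil_ge.
have backups_cover_return : g < (M - N)%:R * x by lra.
split; first exact: (instructed_eventually run x_gt0 backups_cover_return).
split=> [k1 /(next_instruction run x_gt0 backups_cover_return) [_ inst]|].
  by exists (k1 + M)%N; split=> //; lia.
move=> k1 k2 lt_k12 inst1 inst2 none.
rewrite (consecutive_instructions run x_gt0 backups_cover_return lt_k12 inst1 inst2 none).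
by rewrite natrD -mulrBl addrC addKr EM.
Qed.
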